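(* Let $\langle A,\to\rangle$ be a conditional algebra. Then $\langle A,\to\rangle$ is a pseudo-subordination algebra (i.e., additionally satisfies $0\to a=1$ and $(a\to c)\wedge(b\to c)\le(a\vee b)\to c$ for all $a,b,c$) if and only if $T_A$ satisfies: for all ultrafilters $u,v$ and all $Y$, if $T_A(u,Y,v)$ then there exists $w\in Y$ such that $T_A(u,\{w\},v)$.
   Context: A conditional algebra is $\langle A,\to\rangle$ with $A$ a Boolean algebra and $\to$ binary with $a\to1=1$, $(a\to b)\wedge(a\to c)=a\to(b\wedge c)$, $(a\vee b)\to c\le(a\to c)\wedge(b\to c)$. Filters include the improper filter $A$; for a filter $F$, $\varphi(F)=\{u\in\mathrm{Ul}(A):F\subseteq u\}$ (so $\varphi(A)=\emptyset$). $D^{\to}_u(F)=\{b:\exists a\in F,\ a\to b\in u\}$; $T_A(u,Z,v)$ iff there is a filter $F$ with $Z=\varphi(F)$ and $D^{\to}_u(F)\subseteq v$. *)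

From HB Require Import structures.
From mathcomp Require Import all_boot all_order.
From mathcomp Require Import boolp classical_sets.
Set Implicit Arguments. Unset Strict Implicit. Unset Printing Implicit Defensive.
Import Order.TTheory.

Section ConditionalAlgebras.
Context {disp : Order.disp_t} {A : ctbDistrLatticeType disp}.

Local Open Scope order_scope.

Definition conditional_algebra (imp : A -> A -> A) : Prop :=
  (forall a, imp a \top = \top) /\
  (forall a b c, Order.meet (imp a b) (imp a c) = imp a (Order.meet b c)) /\
  (forall a b c, imp (Order.join a b) c <= Order.meet (imp a c) (imp b c)).

Definition pseudo_subordination_algebra (imp : A -> A -> A) : Prop :=
  conditional_algebra imp /\
  (forall a, imp \bot a = \top) /\
  (forall a b c, Order.meet (imp a c) (imp b c) <= imp (Order.join a b) c).

(* Filters (the improper filter A itself included). *)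
Definition is_filter (F : set A) : Prop :=
  F \top /\
  (forall a b, F a -> a <= b -> F b) /\
  (forall a b, F a -> F b -> F (Order.meet a b)).

Definition proper_filter (F : set A) : Prop := is_filter F /\ ~ F \bot.

Definition ultrafilter (u : set A) : Prop :=
  proper_filter u /\
  (forall G : set A, proper_filter G -> (u `<=` G)%classic -> G = u).

Definition phi (F : set A) : set (set A) :=
  [set u | ultrafilter u /\ (F `<=` u)%classic].

Definition Dimp (imp : A -> A -> A) (u F : set A) : set A :=
  [set b | exists2 a, F a & u (imp a b)].

Definition TA (imp : A -> A -> A) (u : set A) (Z : set (set A)) (v : set A)
  : Prop :=
  exists F : set A, [/\ is_filter F, Z = phi F & (Dimp imp u F `<=` v)%classic].

End ConditionalAlgebras.

From HB Require Import structures.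
From mathcomp Require Import all_boot all_order.
From mathcomp Require Import boolp classical_sets.
Set Implicit Arguments. Unset Strict Implicit. Unset Printing Implicit Defensive.
Import Order.Theory.

(* Everything rests on the prime filter theorem: a filter disjoint from an
   ideal extends to an ultrafilter disjoint from it.  In a pseudo-subordination
   algebra, if D_u(F) is contained in v, the a such that a -> b is in u for some
   b outside v form an ideal (by 0 -> b = 1, the join axiom and primeness of v)
   disjoint from F; an ultrafilter w containing F and avoiding that ideal gives
   T_A(u, {w}, v).  Conversely, if 0 -> 0 were outside an ultrafilter u, then
   D_u(A) would be proper and T_A(u, phi(A), v) would hold for some v, with no
   witness since phi(A) is empty.  If (a -> c) /\ (b -> c) were not below
   (a \/ b) -> c, separate them by an ultrafilter u and take v avoiding c with
   T_A(u, phi(up(a \/ b)), v); a witness w is prime, so contains a or b, and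
   this pushes c into v. *)

Section Ultrafilters.
Context {disp : Order.disp_t} {A : ctbDistrLatticeType disp}.
Local Open Scope classical_set_scope.
Local Open Scope order_scope.

Definition upward_closed (X : set A) : Prop :=
  forall a b, X a -> a <= b -> X b.

Definition meet_closed (X : set A) : Prop :=
  forall a b, X a -> X b -> X (a `&` b).

Definition is_ideal (I : set A) : Prop :=
  [/\ I \bot, (forall a b, I b -> a <= b -> I a)
    & (forall a b, I a -> I b -> I (a `|` b))].

Lemma is_filter_ge (x : A) : is_filter [set y | x <= y].
Proof.
split; first exact: lex1.
split; first by move=> a b xa ab; exact: le_trans ab.
by move=> a b xa xb; rewrite /= lexI xa xb.
Qed.

Lemma is_ideal_le (x : A) : is_ideal [set y | y <= x].
Proof.
split; first exact: le0x.
  by move=> a b bx ab; exact: le_trans bx.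
by move=> a b ax bx; rewrite /= leUx ax bx.
Qed.

Definition adjoin (X : set A) (g : A) : set A :=
  [set y | exists2 m, X m & m `&` g <= y].

Lemma adjoin_upward (X : set A) g : upward_closed (adjoin X g).
Proof. by move=> a b [m Xm mga] ab; exists m => //; exact: le_trans ab. Qed.

Lemma adjoin_meet (X : set A) g : meet_closed X -> meet_closed (adjoin X g).
Proof.
move=> XI a b [m1 Xm1 h1] [m2 Xm2 h2]; exists (m1 `&` m2); first exact: XI.
rewrite lexI; apply/andP; split.
  by apply: le_trans h1; apply: leI2 => //; exact: leIl.
by apply: le_trans h2; apply: leI2 => //; exact: leIr.
Qed.

Lemma sub_adjoin (X : set A) g : X `<=` adjoin X g.
Proof. by move=> y Xy; exists y => //; exact: leIl. Qed.

Lemma mem_adjoin (X : set A) g : X \top -> adjoin X g g.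
Proof. by exists \top => //; rewrite meet1x. Qed.

Lemma ultrafilterC (w : set A) x : ultrafilter w -> ~ w x -> w (~` x).
Proof.
move=> [[[wT [wup wI]] _] wmax] wx.
have [[m wm mx0] | adj0] := pselect (adjoin w x \bot).
  by apply: wup wm _; rewrite -disj_leC eq_le mx0 le0x.
have adjP : proper_filter (adjoin w x).
  split=> //; split; first by apply: sub_adjoin.
  by split; [exact: adjoin_upward | exact: adjoin_meet].
by case: wx; rewrite -(wmax _ adjP (@sub_adjoin w x)); exact: mem_adjoin.
Qed.

Lemma ultrafilter_prime (w : set A) a b :
  ultrafilter w -> w (a `|` b) -> w a \/ w b.
Proof.
move=> uw wab; apply: contrapT => /not_orP[na nb].
have [[[_ [_ wI]] w0] _] := uw; apply: w0.
rewrite -(meetCx (a `|` b)) complU; apply: (wI) => //.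
by apply: (wI); exact: ultrafilterC.
Qed.

Lemma ultrafilter_compl_total (w : set A) :
  proper_filter w -> (forall x, w x \/ w (~` x)) -> ultrafilter w.
Proof.
move=> wP wC; split=> // G [[_ [_ GI]] G0] wG; apply/seteqP; split=> // g Gg.
have [//|wg'] := wC g; exfalso; apply: G0.
by rewrite -(meetxC g); apply: GI Gg (wG _ wg').
Qed.

Lemma phi_ultrafilter (w : set A) : ultrafilter w -> phi w = [set w].
Proof.
move=> uw; apply/seteqP; split=> [z [uz wz]|_ ->] /=; last by split.
by have [_ wmax] := uw; apply: wmax => //; case: uz.
Qed.

Lemma TA_set1 (imp : A -> A -> A) (u v w : set A) :
  ultrafilter w -> Dimp imp u w `<=` v -> TA imp u [set w] v.
Proof.
move=> uw Dv; exists w; split=> //; first by case: uw => -[].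
exact/esym/phi_ultrafilter.
Qed.

Section Separation.
Variables (F I : set A).
Hypotheses (Ff : is_filter F) (Iid : is_ideal I) (FI : forall x, F x -> ~ I x).

(* The last clause, rather than [F `<=` X], lets the union of the empty chain
   qualify. *)
Definition avoiding (X : set A) : Prop :=
  [/\ upward_closed X, meet_closed X, (forall x, X x -> ~ I x)
    & X !=set0 -> F `<=` X].

Lemma avoiding_bigcup C :
  C `<=` avoiding -> total_on C subset -> avoiding (\bigcup_(X in C) X).
Proof.
move=> CP Ctot; split.
- move=> a b [X CX Xa] ab; exists X => //.
  by have [Xup _ _ _] := CP X CX; exact: Xup Xa ab.
- move=> a b [X CX Xa] [Y CY Yb].
  have [XY|YX] := Ctot X Y CX CY.
    by exists Y => //; have [_ YI _ _] := CP Y CY; exact: YI (XY _ Xa) Yb.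
  by exists X => //; have [_ XI _ _] := CP X CX; exact: XI Xa (YX _ Yb).
- by move=> x [X CX Xx]; have [_ _ XnI _] := CP X CX; exact: XnI.
- move=> [y [X CX Xy]] z Fz; exists X => //.
  by have [_ _ _ XF] := CP X CX; apply: XF => //; exists y.
Qed.

Section Maximal.
Variable M : set A.
Hypotheses (Mav : avoiding M) (Mmax : forall B, M `<` B -> ~ avoiding B).

Lemma maximal_avoiding_sup : F `<=` M.
Proof.
have [FT [Fup FI']] := Ff; have [_ _ _ +] := Mav; apply.
apply/set0P/eqP => M0; apply: (@Mmax F).
  by rewrite M0; split=> // /(_ _ FT).
by split=> // _; exact: subset_refl.
Qed.

Lemma maximal_avoiding_adjoin g : ~ M g -> exists2 m, M m & I (m `&` g).
Proof.
move=> Mg; apply: contrapT => nI; have [_ MI _ _] := Mav.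
have [_ Idown _] := Iid.
have MT : M \top by apply: maximal_avoiding_sup; case: Ff.
apply: (@Mmax (adjoin M g)).
  by split; [exact: sub_adjoin | move=> /(_ _ (mem_adjoin g MT))].
split; [exact: adjoin_upward | exact: adjoin_meet | | ].
  by move=> y [m Mm mgy] Iy; apply: nI; exists m => //; exact: Idown mgy.
by move=> _; apply: subset_trans (@sub_adjoin M g); exact: maximal_avoiding_sup.
Qed.

Lemma maximal_avoiding_compl g : M g \/ M (~` g).
Proof.
apply: contrapT => /not_orP[/maximal_avoiding_adjoin[m1 Mm1 I1]].
move=> /maximal_avoiding_adjoin[m2 Mm2 I2].
have [_ MI MnI _] := Mav; have [_ Idown IU] := Iid.
apply: (MnI (m1 `&` m2)); first exact: MI.
apply: Idown (IU _ _ I1 I2) _.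
rewrite -[m1 `&` m2]meetx1 -(joinxC g) meetUr; apply: leU2.
  by apply: leI2 => //; exact: leIl.
by apply: leI2 => //; exact: leIr.
Qed.

End Maximal.

Theorem ultrafilter_separation :
  exists w, [/\ ultrafilter w, F `<=` w & forall x, w x -> ~ I x].
Proof.
have [M [Mav Mmax]] := Zorn_bigcup avoiding_bigcup.
have FM := maximal_avoiding_sup Mav Mmax.
have [Mup MI MnI _] := Mav; have [I0 _ _] := Iid.
exists M; split=> //; apply: ultrafilter_compl_total.
  split; first by split; [apply: FM; case: Ff | split].
  by move=> M0; exact: MnI M0 I0.
exact: maximal_avoiding_compl.
Qed.

End Separation.

Lemma exists_phi_notin (G : set A) x :
  is_filter G -> ~ G x -> exists2 w, phi G w & ~ w x.
Proof.
move=> Gf Gx; have [_ [Gup _]] := Gf.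
have [|w [uw Gw wx]] := ultrafilter_separation Gf (is_ideal_le x).
  by move=> z Gz zx; apply: Gx; exact: Gup Gz zx.
exists w; first by split.
by move=> /wx; apply; exact: lexx.
Qed.

Lemma ultrafilter_top (x : A) : (forall w, ultrafilter w -> w x) -> x = \top.
Proof.
move=> H; apply/eqP; rewrite eq_le lex1 /=; apply: contrapT => xT.
by have [w [uw _] []] := exists_phi_notin (is_filter_ge \top) xT; exact: H.
Qed.

Lemma phi_set1_sub (G w : set A) : is_filter G -> phi G = [set w] -> w `<=` G.
Proof.
move=> Gf GE x wx; apply: contrapT => Gx.
have [w' w'G w'x] := exists_phi_notin Gf Gx.
by move: w'G; rewrite GE => /= w'w; apply: w'x; rewrite w'w.
Qed.

Definition TA_witnessed (imp : A -> A -> A) : Prop :=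
  forall u v Y, ultrafilter u -> ultrafilter v -> TA imp u Y v ->
  exists2 w, Y w & TA imp u [set w] v.

Section ConditionalAlgebra.
Variable imp : A -> A -> A.
Hypothesis CA : conditional_algebra imp.

Lemma imp_monotone_r a b c : b <= c -> imp a b <= imp a c.
Proof.
have [_ [impI _]] := CA => bc; rewrite -(meet_l bc) -impI; exact: leIr.
Qed.

Lemma imp_antitone_l a b c : a <= b -> imp b c <= imp a c.
Proof.
have [_ [_ impU]] := CA => ab; rewrite -(join_r ab).
by apply: le_trans (impU _ _ _) _; exact: leIl.
Qed.

Lemma Dimp_filter (u F : set A) :
  is_filter u -> is_filter F -> is_filter (Dimp imp u F).
Proof.
move=> [uT [uup uI]] [FT [_ FI]]; have [imp1 [impI _]] := CA.
split; first by exists \top => //; rewrite imp1.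
split.
  move=> a b [c Fc uc] ab; exists c => //.
  by apply: uup uc _; exact: imp_monotone_r.
move=> a b [c1 F1 u1] [c2 F2 u2]; exists (c1 `&` c2); first exact: FI.
rewrite -impI; apply: uI.
  by apply: uup u1 _; apply: imp_antitone_l; exact: leIl.
by apply: uup u2 _; apply: imp_antitone_l; exact: leIr.
Qed.

Lemma exists_TA_notin (u F : set A) c :
    is_filter u -> is_filter F -> ~ Dimp imp u F c ->
  exists v, [/\ ultrafilter v, ~ v c & TA imp u (phi F) v].
Proof.
move=> uf Ff Dc; have [v [uv Dv] vc] := exists_phi_notin (Dimp_filter uf Ff) Dc.
by exists v; split=> //; exists F.
Qed.

Lemma is_ideal_imp_notin (u v : set A) :
    (forall a, imp \bot a = \top) ->
    (forall a b c, imp a c `&` imp b c <= imp (a `|` b) c) ->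
    is_filter u -> ultrafilter v ->
  is_ideal [set a | exists2 b, ~ v b & u (imp a b)].
Proof.
move=> imp0x impU [uT [uup uI]] uv; have [[_ v0] _] := uv.
split.
- by exists \bot => //; rewrite imp0x.
- move=> a a' [b vb ub] aa'; exists b => //.
  by apply: uup ub _; exact: imp_antitone_l.
- move=> a1 a2 [b1 v1 u1] [b2 v2 u2]; exists (b1 `|` b2).
    by move=> /(ultrafilter_prime uv) [].
  apply: (uup) (impU _ _ _); apply: uI.
    by apply: uup u1 _; apply: imp_monotone_r; exact: leUl.
  by apply: uup u2 _; apply: imp_monotone_r; exact: leUr.
Qed.

Lemma psa_TA_witnessed : pseudo_subordination_algebra imp -> TA_witnessed imp.
Proof.
move=> [_ [imp0x impU]] u v Y uu uv [F [Ff -> DFv]].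
have [[uf _] _] := uu.
have Iid := is_ideal_imp_notin imp0x impU uf uv.
have [|w [uw Fw wI]] := ultrafilter_separation Ff Iid.
  by move=> x Fx [b vb ub]; apply: vb; apply: DFv; exists x.
exists w; first by split.
apply: TA_set1 => // b [a wa ua]; apply: contrapT => vb.
by apply: (wI a wa); exists b.
Qed.

Section Witnessed.
Hypothesis TAw : TA_witnessed imp.

Lemma TA_witnessed_imp0x a : imp \bot a = \top.
Proof.
suff imp00 : imp \bot \bot = \top.
  by apply/eqP; rewrite -le1x -imp00; exact: imp_monotone_r (le0x a).
apply: ultrafilter_top => u uu; apply: contrapT => u00.
have [[uf _] _] := uu.
have setTf : is_filter (@setT A) by [].
have [|v [uv _ TAv]] := exists_TA_notin (c := \bot) uf setTf.
  by move=> [d _ ud]; apply: u00; apply: uf.2.1 ud _; exact: imp_antitone_l.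
have [w [[[_ w0] _] Tw] _] := TAw uu uv TAv.
exact: w0 (Tw _ I).
Qed.

Lemma TA_witnessed_impU a b c :
  imp a c `&` imp b c <= imp (a `|` b) c.
Proof.
set x := imp a c `&` imp b c; apply: contrapT => xy.
have [u [uu xu] uy] := exists_phi_notin (is_filter_ge x) xy.
have [[[_ [uup _]] _] _] := uu; have ux : u x := xu _ (lexx x).
have [|v [uv vc TAv]] :=
  exists_TA_notin (c := c) uu.1.1 (is_filter_ge (a `|` b)).
  move=> [a' aba' ua']; apply: uy; apply: uup ua' _.
  exact: imp_antitone_l.
have [w [uw Fw] [G [Gf GE DGv]]] := TAw uu uv TAv.
have wG := phi_set1_sub Gf (esym GE).
have push e : w e -> u (imp e c) -> False.
  by move=> we ue; apply: vc; apply: DGv; exists e => //; exact: wG.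
have [wa|wb] := ultrafilter_prime uw (Fw _ (lexx (a `|` b))).
  by apply: (push a wa); apply: uup ux _; exact: leIl.
by apply: (push b wb); apply: uup ux _; exact: leIr.
Qed.

End Witnessed.
End ConditionalAlgebra.
End Ultrafilters.

Theorem theorem9p4 (disp : Order.disp_t) (A : ctbDistrLatticeType disp)
    (imp : A -> A -> A) :
  conditional_algebra imp ->
  (pseudo_subordination_algebra imp <->
   (forall (u v : set A) (Y : set (set A)),
      ultrafilter u -> ultrafilter v -> TA imp u Y v ->
      exists2 w, Y w & TA imp u [set w] v)).
Proof.
move=> CA; split; first exact: psa_TA_witnessed.
move=> TAw; split=> //; split=> [a|a b c].
  exact: TA_witnessed_imp0x.
exact: TA_witnessed_impU.
Qed.
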